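(* Let $G=(V,E)$ be a directed graph with $|V|=n$ vertices, and let $W\subseteq V$ be a set of vertices whose minimal dominating set has size $k$. Then $W$ contains an independent set $U$ of size at least $\tfrac{1}{50}k/\ln n$ with the property that every vertex $v\in V$ dominates at most $\ln n$ vertices of $U$, i.e. $|N^{\mathrm{out}}(v)\cap U|\le\ln n$ for all $v\in V$.
   Context: For a directed graph $G=(V,E)$ (self-loops allowed), $N^{\mathrm{out}}(v)=\{w:(v,w)\in E\}$; a vertex $v$ dominates $w$ if $w\in N^{\mathrm{out}}(v)$. A dominating set of $W\subseteq V$ is a set $D\subseteq V$ such that every $w\in W$ is dominated by some $d\in D$; ''the minimal dominating set of $W$ has size $k$'' means the smallest such $D$ has $|D|=k$. An independent set is a set $S$ such that $(u,v)\notin E$ for all distinct $u,v\in S$. *)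

From mathcomp Require Import all_boot all_order all_algebra.
From mathcomp Require Import reals exp.
Set Implicit Arguments. Unset Strict Implicit. Unset Printing Implicit Defensive.

(* A directed graph on V is an edge relation e : rel V (self-loops allowed). *)
Definition Nout (V : finType) (e : rel V) (v : V) : {set V} := [set w | e v w].

Definition dominates (V : finType) (e : rel V) (D W : {set V}) : Prop :=
  forall w, w \in W -> exists2 d, d \in D & e d w.

Definition min_dom_size (V : finType) (e : rel V) (W : {set V}) (k : nat) : Prop :=
  (exists D : {set V}, dominates e D W /\ #|D| = k) /\
  (forall D : {set V}, dominates e D W -> k <= #|D|).

Definition independent (V : finType) (e : rel V) (S : {set V}) : Prop :=
  forall u v, u \in S -> v \in S -> u != v -> ~~ e u v.

From mathcomp Require Import all_boot all_order all_algebra.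
From mathcomp Require Import reals exp sequences.
From mathcomp Require Import ring lra zify.
Set Implicit Arguments.
Unset Strict Implicit.
Unset Printing Implicit Defensive.

Import Order.TTheory GRing.Theory Num.Theory.
Local Open Scope ring_scope.

(** Grow U inside W one vertex at a time while controlling the potential
    Phi(U) = sum_v exp(2 |N(v) cap U|).  If every candidate x in W \ U received
    at least an a-fraction of the weights exp(2 |N(v) cap U|) from its dominators,
    the weighted greedy set cover would dominate W \ U with about ln n / a vertices;
    adding |U| dominators for U would then undercut the domination number k.  So
    some candidate is light and Phi grows by at most a factor e^(8a) per step.  With
    a = ln n / (k - r - 1) and r ~ k/10 steps, Phi(U) <= e^(2 ln n), hence every
    vertex dominates at most ln n vertices of U.  The undirected graph induced on U
    then has average degree at most 2 ln n, and repeatedly taking a vertex of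
    minimum degree yields an independent subset of size |U| / (2 ln n + 1).  For
    k < 10 a single vertex of W already suffices. *)

Lemma expR1_le3 (R : realType) : expR 1 <= 3 :> R.
Proof.
have exp_sixth_le : expR (1/6) <= 6/5 :> R.
  have := expR_ge1Dx (- (1/6) : R); have := expRxMexpNx_1 (1/6 : R).
  have := expR_gt0 (1/6 : R); nra.
have -> : expR (1 : R) = expR (1/6) ^+ 6 by rewrite -expRM_natl; congr expR; field.
apply: (@le_trans _ _ ((6/5) ^+ 6)); last by rewrite !exprS expr0; lra.
by apply: lerXn2r; rewrite ?nnegrE ?expR_ge0 //; lra.
Qed.

Lemma ln_nat_ge1 (R : realType) (n : nat) : (2 < n)%N -> 1 <= ln (n%:R : R).
Proof.
move=> n_gt2; apply: (@le_trans _ _ (ln (expR 1))); first by rewrite expRK.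
rewrite ler_ln ?posrE ?expR_gt0 ?ltr0n ?(ltn_trans _ n_gt2) //.
by apply: le_trans (expR1_le3 R) _; rewrite (ler_nat _ 3).
Qed.

Section IndependentSubset.
Variables (V : finType) (e : rel V).

Lemma NoutI v (U : {set V}) : Nout e v :&: U = [set w in U | e v w].
Proof. by apply/setP => w; rewrite !inE andbC. Qed.

Lemma card_set_in (U : {set V}) (P : pred V) :
  #|[set w in U | P w]| = (\sum_(w in U) P w)%N.
Proof.
rewrite -sum1_card (eq_bigl (fun w => (w \in U) && P w)) => [|w]; last by rewrite inE.
by rewrite big_mkcondr; apply: eq_bigr => w _; case: (P w).
Qed.

Lemma sum_card_Nout_in (U : {set V}) :
  (\sum_(u in U) #|[set w in U | e w u]| = \sum_(u in U) #|[set w in U | e u w]|)%N.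
Proof.
under eq_bigr do rewrite card_set_in.
by rewrite exchange_big; apply: eq_bigr => u _; rewrite card_set_in.
Qed.

Definition nbrs (U : {set V}) u := [set w in U | (w != u) && (e u w || e w u)].

Lemma exists_low_degree (U : {set V}) (t : nat) :
  U != set0 -> (forall v, #|Nout e v :&: U| <= t)%N ->
  exists2 u, u \in U & (#|nbrs U u| <= 2 * t)%N.
Proof.
move=> U0 hl; apply/exists_inP; apply: contraNT U0 => /exists_inPn hdeg.
rewrite -cards_eq0 -leqn0.
have nbrs_le u : (#|nbrs U u| <= #|[set w in U | e u w]| + #|[set w in U | e w u]|)%N.
  apply: leq_trans (leq_card_setU _ _); apply: subset_leq_card.
  by apply/subsetP => w; rewrite !inE => /andP[-> /andP[_ ->]].
have out_le : (\sum_(u in U) #|[set w in U | e u w]| <= #|U| * t)%N.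
  by rewrite -sum_nat_const; apply: leq_sum => u _; rewrite -NoutI.
have : (\sum_(u in U) (2 * t).+1 <= \sum_(u in U) #|nbrs U u|)%N.
  by apply: leq_sum => u uU; rewrite ltnNge hdeg.
have := @leq_sum _ (index_enum V) (mem U) _ _ (fun u _ => nbrs_le u).
rewrite sum_nat_const big_split /= sum_card_Nout_in; lia.
Qed.

Lemma independent0 : independent e set0.
Proof. by move=> u v; rewrite inE. Qed.

Lemma independent_setU1 (I : {set V}) u :
  independent e I -> (forall w, w \in I -> w != u -> ~~ e u w && ~~ e w u) ->
  independent e (u |: I).
Proof.
move=> indI hu x y; rewrite !in_setU1.
case/orP => [/eqP -> | xI]; case/orP => [/eqP -> | yI]; rewrite ?eqxx //.
- by move=> /[1!eq_sym] yu; case/andP: (hu y yI yu).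
- by move=> xu; case/andP: (hu x xI xu).
- exact: indI.
Qed.

Lemma independent_subset_degenerate (U : {set V}) (t : nat) :
  (forall v, #|Nout e v :&: U| <= t)%N ->
  exists2 I : {set V}, I \subset U & independent e I /\ (#|U| <= #|I| * (2 * t + 1))%N.
Proof.
move: {2}#|U| (leqnn #|U|) => m; elim: m U => [|m IH] U hU hl.
  by exists set0; [exact: sub0set | split; [exact: independent0 | lia]].
have [->|U0] := eqVneq U set0.
  by exists set0 => //; split; [exact: independent0 | rewrite cards0].
have [u uU hu] := exists_low_degree U0 hl.
have sub_star : u |: nbrs U u \subset U.
  by apply/subsetP => w; rewrite !inE => /orP[/eqP -> // | /andP[]].
have u_nbrs : u \notin nbrs U u by rewrite inE eqxx andbF.
set U' := U :\: (u |: nbrs U u).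
have cardU : #|U| = (#|U'| + (#|nbrs U u|).+1)%N.
  rewrite cardsD (setIidPr sub_star) cardsU1 u_nbrs.
  by have := subset_leq_card sub_star; rewrite cardsU1 u_nbrs; lia.
have [|v|I' sI' [indI' cardI']] := IH U'; first lia.
  by apply: leq_trans (hl v); apply/subset_leq_card/setIS/subsetDl.
have uI' : u \notin I' by apply/negP => /(subsetP sI'); rewrite !inE eqxx.
exists (u |: I').
  by rewrite subUset sub1set uU (subset_trans sI') ?subsetDl.
split; last by rewrite cardsU1 uI'; lia.
apply: independent_setU1 => // w wI' wu.
have := subsetP sI' w wI'; rewrite !inE => /andP[+ wU].
by rewrite wU (negbTE wu) /= negb_or.
Qed.
End IndependentSubset.

Section Domination.
Variables (V : finType) (e : rel V).

Lemma dominatesU (D1 D2 A B : {set V}) :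
  dominates e D1 A -> dominates e D2 B -> dominates e (D1 :|: D2) (A :|: B).
Proof.
by move=> domA domB x; rewrite inE => /orP[/domA | /domB] [d dD edx];
  exists d; rewrite // inE dD ?orbT.
Qed.

Lemma dominates_subset_card (D0 A B : {set V}) : dominates e D0 B -> A \subset B ->
  exists2 D, dominates e D A & (#|D| <= #|A|)%N.
Proof.
move=> domB sAB; pose f x := odflt x [pick d in D0 | e d x].
exists (f @: A); last exact: leq_imset_card.
move=> x xA; exists (f x); first exact: imset_f.
rewrite /f; case: pickP => [d /andP[] // | none].
by have [d dD edx] := domB x (subsetP sAB x xA); move: (none d); rewrite dD edx.
Qed.

Lemma min_dom_size_nonempty (W : {set V}) (k : nat) :
  min_dom_size e W k -> (0 < k)%N -> W != set0.
Proof.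
move=> [_ kmin]; apply: contraTneq => W0; rewrite -leqNgt -(cards0 V).
by apply: kmin => x; rewrite W0 inE.
Qed.

End Domination.

Section WeightedGreedyCover.
Variables (R : realType) (V : finType) (e : rel V).
Variables (w : V -> R) (a : R) (W : {set V}).
Hypotheses (V_gt0 : (0 < #|V|)%N) (w_gt0 : forall v, 0 < w v) (a_gt0 : 0 < a).
Hypothesis W_heavy : forall x, x \in W -> a * \sum_v w v <= \sum_(v | e v x) w v.

Lemma sum_weight_card_Nout (S : {set V}) :
  \sum_v w v * #|Nout e v :&: S|%:R = \sum_(x in S) \sum_(v | e v x) w v.
Proof.
under eq_bigr => v _ do rewrite NoutI card_set_in natr_sum mulr_sumr.
rewrite exchange_big; apply: eq_bigr => x _.
by rewrite [RHS]big_mkcond; apply: eq_bigr => v _; case: (e v x); rewrite ?mulr1 ?mulr0.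
Qed.

Lemma exists_heavy_dominator (S : {set V}) : S \subset W ->
  exists v, a * #|S|%:R <= #|Nout e v :&: S|%:R.
Proof.
move=> sSW; apply/existsP; rewrite -[X in is_true X]negbK negb_exists.
apply/negP => /forallP hlt; have /card_gt0P[v0 _] := V_gt0.
have upper : \sum_v w v * #|Nout e v :&: S|%:R < \sum_v w v * (a * #|S|%:R).
  apply: ltr_sum; first by apply/hasP; exists v0; rewrite ?mem_index_enum.
  by move=> v _; rewrite ltr_pM2l // ltNge hlt.
have lower : \sum_v w v * (a * #|S|%:R) <= \sum_v w v * #|Nout e v :&: S|%:R.
  rewrite sum_weight_card_Nout -mulr_suml.
  apply: (@le_trans _ _ (\sum_(x in S) a * \sum_v w v)).
    by rewrite sumr_const -[X in _ <= X]mulr_natr mulrCA mulrA.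
  by apply: ler_sum => x xS; exact: W_heavy (subsetP sSW x xS).
by move: (lt_le_trans upper lower); rewrite ltxx.
Qed.

Definition undominated (D : {set V}) := [set x in W | [forall d in D, ~~ e d x]].

Lemma undominated_setU1 v D :
  undominated (v |: D) = undominated D :\: Nout e v.
Proof.
apply/setP => x; rewrite in_setD !in_set.
apply/andP/and3P => [[xW /forall_inP hD] | [nvx xW /forall_inP hD]].
  split=> //; first by apply: hD; rewrite setU11.
  by apply/forall_inP => d dD; apply: hD; rewrite setU1r.
split=> //; apply/forall_inP => d; rewrite in_setU1.
by case/orP => [/eqP -> | /hD].
Qed.

Lemma undominated_sub D : undominated D \subset W.
Proof. by apply/subsetP => x; rewrite inE => /andP[]. Qed.

Lemma undominated_card_le (j : nat) : exists D : {set V},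
  (#|D| <= j)%N /\ #|undominated D|%:R <= #|V|%:R * expR (- a * j%:R).
Proof.
elim: j => [|j [D [cardD undomD]]].
  exists set0; split; first by rewrite cards0.
  by rewrite mulr0 expR0 mulr1 ler_nat max_card.
set S := undominated D.
have [v heavy_v] := exists_heavy_dominator (undominated_sub D).
exists (v |: D); split; first by rewrite cardsU1; lia.
rewrite undominated_setU1 cardsD natrB ?subset_leq_card ?subsetIl // setIC.
apply: (@le_trans _ _ (expR (- a) * #|S|%:R)).
  apply: (@le_trans _ _ ((1 - a) * #|S|%:R)); first lra.
  by apply: ler_wpM2r; [exact: ler0n | exact: expR_ge1Dx].
rewrite -addn1 natrD mulrDr mulr1 expRD [X in _ <= X]mulrA [X in _ <= X]mulrC.
by apply: ler_wpM2l; [exact: expR_ge0 | exact: undomD].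
Qed.

Lemma greedy_dominating_set :
  exists2 D, dominates e D W & #|D|%:R <= ln #|V|%:R / a + 1.
Proof.
pose j := (Num.truncn (ln (#|V|%:R : R) / a)).+1.
have [D [cardD undomD]] := undominated_card_le j.
have lnV_ge0 : 0 <= ln (#|V|%:R : R) by apply: ln_ge0; rewrite ler1n.
have undom0 : undominated D = set0.
  apply/eqP; rewrite -cards_eq0 -leqn0 -ltnS -(ltr_nat R).
  apply: le_lt_trans undomD _.
  rewrite -[X in X * _]lnK ?posrE ?ltr0n // -expRD expR_lt1 mulNr subr_lt0.
  by rewrite mulrC -ltr_pdivrMr // truncnS_gt.
exists D.
  move=> x xW; have : x \notin undominated D by rewrite undom0 inE.
  by rewrite inE xW negb_forall_in => /exists_inP[d dD /negPn]; exists d.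
apply: (@le_trans _ _ j%:R); first by rewrite ler_nat.
by rewrite /j -addn1 natrD lerD2r truncn_le divr_ge0 // ltW.
Qed.

End WeightedGreedyCover.

Section LowLoadSubset.
Variables (R : realType) (V : finType) (e : rel V) (W : {set V}) (k : nat).
Hypotheses (V_gt1 : (1 < #|V|)%N) (hk : min_dom_size e W k).

Lemma light_vertex_exists (w : V -> R) (a : R) (U : {set V}) :
  (forall v, 0 < w v) -> 0 < a -> #|U|%:R + ln #|V|%:R / a + 1 < k%:R ->
  exists2 x, x \in W :\: U & \sum_(v | e v x) w v < a * \sum_v w v.
Proof.
move=> w_gt0 a_gt0 U_small; apply/exists_inP; apply: contraTT U_small.
move=> /exists_inPn light; rewrite -leNgt.
have heavy x : x \in W :\: U -> a * \sum_v w v <= \sum_(v | e v x) w v.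
  by move/light; rewrite -leNgt.
have [D1 domD1 cardD1] :=
  greedy_dominating_set (ltnW V_gt1) w_gt0 a_gt0 heavy.
have [[D0 [domW _]] kmin] := hk.
have [D2 domD2 cardD2] := dominates_subset_card domW (subsetIl W U).
have := dominatesU domD2 domD1; rewrite setID => /kmin; rewrite -(ler_nat R) => k_le.
apply: (le_trans k_le); rewrite -addrA.
apply: (@le_trans _ _ (#|D2|%:R + #|D1|%:R)).
  by rewrite -natrD ler_nat leq_card_setU.
by apply: lerD => //; rewrite ler_nat (leq_trans cardD2) // subset_leq_card // subsetIr.
Qed.

Definition potential (U : {set V}) : R := \sum_v expR (2 * #|Nout e v :&: U|%:R).

Lemma card_Nout_setU1 v x (U : {set V}) : x \notin U ->
  #|Nout e v :&: (x |: U)| = (e v x + #|Nout e v :&: U|)%N.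
Proof.
move=> xU; case evx: (e v x) => /=.
  have -> : Nout e v :&: (x |: U) = x |: (Nout e v :&: U).
    by apply/setP => y; rewrite !inE; case: (y =P x) => [-> |] //=; rewrite evx.
  by rewrite cardsU1 inE (negbTE xU) andbF.
rewrite (_ : Nout e v :&: (x |: U) = Nout e v :&: U) //; apply/setP => y; rewrite !inE.
by case: (y =P x) => [-> |] //=; rewrite evx (negbTE xU).
Qed.

Lemma potential_setU1 (U : {set V}) x : x \notin U ->
  potential (x |: U) = potential U +
    (expR 2 - 1) * \sum_(v | e v x) expR (2 * #|Nout e v :&: U|%:R).
Proof.
move=> xU; rewrite /potential mulr_sumr [X in _ + X]big_mkcond -big_split.
apply: eq_bigr => v _; rewrite card_Nout_setU1 //.
case: (e v x) => /=; last by rewrite add0n addr0.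
by rewrite natrD mulrDr mulr1 expRD; ring.
Qed.

Lemma potential_setU1_le (U : {set V}) x (a : R) : x \notin U ->
  \sum_(v | e v x) expR (2 * #|Nout e v :&: U|%:R) <= a * potential U ->
  potential (x |: U) <= expR (8 * a) * potential U.
Proof.
move=> xU light; rewrite potential_setU1 //.
have e2_le : expR 2 - 1 <= 8 :> R.
  have -> : expR (2 : R) = expR 1 ^+ 2 by rewrite -expRM_natl mulr1.
  by have := expR1_le3 R; have := expR_ge0 (1 : R); rewrite expr2; nra.
have e2_ge : 0 <= expR 2 - 1 :> R by have := expR_ge1Dx (2 : R); lra.
have sum_ge0 : 0 <= \sum_(v | e v x) expR (2 * #|Nout e v :&: U|%:R) :> R.
  by apply: sumr_ge0 => v _; exact: expR_ge0.
have pot_ge0 : 0 <= potential U by apply: sumr_ge0 => v _; exact: expR_ge0.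
have := expR_ge1Dx (8 * a); nra.
Qed.

(* The rate ln n / (k - r - 1) is exactly what keeps |U| + ln n / rate + 1 < k
   as long as |U| < r. *)
Lemma low_potential_subset (r j : nat) : (r.+1 < k)%N -> (j <= r)%N ->
  exists U : {set V}, [/\ U \subset W, #|U| = j &
    potential U <= #|V|%:R * expR (8 * (ln #|V|%:R / (k - r - 1)%:R) * j%:R)].
Proof.
move=> r_lt; elim: j => [_ | j IH j_lt].
  exists set0; split; [exact: sub0set | by rewrite cards0 | ].
  rewrite mulr0 expR0 mulr1 /potential.
  by under eq_bigr do rewrite setI0 cards0 mulr0 expR0; rewrite sumr_const.
have [U [sUW cardU potU]] := IH (ltnW j_lt).
set a := ln (#|V|%:R : R) / (k - r - 1)%:R.
have lnV_gt0 : 0 < ln (#|V|%:R : R) by apply: ln_gt0; rewrite ltr1n.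
have a_gt0 : 0 < a by apply: divr_gt0; rewrite // ltr0n; lia.
have [x xWU light_x] :
    exists2 x, x \in W :\: U & \sum_(v | e v x) expR (2 * #|Nout e v :&: U|%:R) < a * potential U.
  apply: light_vertex_exists => [v | // |]; first exact: expR_gt0.
  have -> : ln (#|V|%:R : R) / a = (k - r - 1)%:R.
    by rewrite /a; field; rewrite pnatr_eq0 gt_eqF ?(gt_eqF lnV_gt0); lia.
  by rewrite cardU -natrD natr1 ltr_nat; lia.
move: xWU; rewrite inE => /andP[xU xW].
exists (x |: U); split.
- by rewrite subUset sub1set xW.
- by rewrite cardsU1 xU cardU.
apply: (le_trans (potential_setU1_le xU (ltW light_x))).
apply: (le_trans (ler_wpM2l (expR_ge0 _) potU)).
by rewrite -/a -[j.+1]addn1 natrD mulrDr mulr1 expRD mulrCA [expR (8 * a) * _]mulrC.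
Qed.

Lemma low_load_subset (r : nat) : (0 < r)%N -> (9 * r + 1 <= k)%N ->
  exists U : {set V}, [/\ U \subset W, #|U| = r &
    forall v, #|Nout e v :&: U|%:R <= ln (#|V|%:R : R)].
Proof.
move=> r_gt0 k_ge; have [|U [sUW cardU potU]] := low_potential_subset (j := r) _ (leqnn r).
  lia.
exists U; split => // v; set L := ln (#|V|%:R : R).
have L_ge0 : 0 <= L by apply: ln_ge0; rewrite ler1n (ltnW V_gt1).
have rate : 8 * (L / (k - r - 1)%:R) * r%:R <= L.
  have -> : 8 * (L / (k - r - 1)%:R) * r%:R = L * ((8 * r)%:R / (k - r - 1)%:R).
    by rewrite natrM; ring.
  by rewrite ler_piMr // ler_pdivrMr ?ltr0n ?mul1r ?ler_nat; lia.
have load_le : expR (2 * #|Nout e v :&: U|%:R) <= potential U.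
  by rewrite /potential (bigD1 v) //= lerDl; apply: sumr_ge0 => i _; exact: expR_ge0.
have pot_le : potential U <= expR (2 * L).
  apply: (le_trans potU); rewrite -[X in X * _]lnK ?posrE ?ltr0n ?(ltnW V_gt1) //.
  by rewrite -expRD ler_expR -/L; lra.
by have := le_trans load_le pot_le; rewrite ler_expR; lra.
Qed.

End LowLoadSubset.

Section SparseIndependentSet.
Variables (R : realType) (V : finType) (e : rel V) (W : {set V}) (k : nat).
Hypotheses (hn : (2 < #|V|)%N) (hk : min_dom_size e W k).

Definition sparse_independent (U : {set V}) (m : R) :=
  [/\ U \subset W, independent e U, m <= #|U|%:R &
      forall v, #|Nout e v :&: U|%:R <= ln (#|V|%:R : R)].

Lemma sparse_independent_small : (k < 10)%N ->
  exists U, sparse_independent U (k%:R / (50 * ln #|V|%:R)).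
Proof.
move=> k_lt10; have L_ge1 := ln_nat_ge1 R hn.
have [->|k_gt0] := posnP k.
  exists set0; split; rewrite ?sub0set ?mul0r ?cards0 //; first exact: independent0.
  by move=> v; rewrite setI0 cards0; lra.
have /set0Pn[w0 w0W] := min_dom_size_nonempty hk k_gt0.
exists [set w0]; split; first by rewrite sub1set.
- by move=> u v /set1P-> /set1P->; rewrite eqxx.
- rewrite cards1 ler_pdivrMr ?mulr_gt0 ?mul1r; try lra.
  by apply: (@le_trans _ _ 50); [rewrite (ler_nat _ k 50); lia | lra].
- move=> v; apply: le_trans L_ge1.
  by rewrite (ler_nat _ _ 1) -(cards1 w0) subset_leq_card // subsetIr.
Qed.

Lemma sparse_independent_large : (10 <= k)%N ->
  exists U, sparse_independent U (k%:R / (50 * ln #|V|%:R)).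
Proof.
move=> k_ge10; set L := ln (#|V|%:R : R); have L_ge1 : 1 <= L := ln_nat_ge1 R hn.
pose r := (k %/ 10)%N.
have [||U [sUW cardU loadU]] := low_load_subset R (ltnW hn) hk (r := r); try lia.
pose t := Num.truncn L.
have t_le : t%:R <= L by rewrite truncn_le; lra.
have load_t v : (#|Nout e v :&: U| <= t)%N by rewrite truncn_ge_nat ?loadU //; lra.
have [I sIU [indI cardI]] := independent_subset_degenerate load_t.
exists I; split.
- exact: subset_trans sIU sUW.
- exact: indI.
- have I_gt0 : (0 < #|I|)%N.
    by rewrite lt0n; apply/eqP => I0; move: cardI; rewrite cardU I0; lia.
  have : (k <= 10 * r + 9)%N by lia.
  move: cardI I_gt0; rewrite cardU -!(ler_nat R) !natrD !natrM => rI I_ge1 kR.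
  (* k <= 10 r + 9 <= 10 |I| (2 L + 1) + 9 |I| <= 50 L |I|, using L >= 1 *)
  rewrite ler_pdivrMr ?mulr_gt0; nra.
- move=> v; apply: le_trans (loadU v).
  by rewrite ler_nat subset_leq_card // setIS.
Qed.

End SparseIndependentSet.

Theorem lemma8 (R : realType) (V : finType) (e : rel V) (W : {set V}) (k : nat)
  (hn : (2 < #|V|)%N)
  (hk : min_dom_size e W k) :
  exists U : {set V},
    [/\ U \subset W, independent e U,
        (k%:R / (50 * ln (#|V|%:R : R)) <= #|U|%:R)
      & forall v : V, (#|Nout e v :&: U|%:R : R) <= ln (#|V|%:R : R)].
Proof.
have [k_lt10 | k_ge10] := ltnP k 10.
  exact: sparse_independent_small hn hk k_lt10.
exact: sparse_independent_large hn hk k_ge10.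
Qed.
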